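(* Let $g\in\mathscr T'$ and $f\in\mathscr T$. For $n\in\mathbb N$ let $\varepsilon_n(f)\in\mathcal F_{\rm fin}(\mathscr T)$ be the vector whose only nonzero component is the $n$-particle component $\frac{1}{\sqrt{n!}}f^{\otimes n}$. Then the series $\varepsilon(f)=\sum_{n\ge0}\varepsilon_n(f)$ converges absolutely in $\mathcal F_g$ (denote its sum $\varepsilon_g(f)$) and in $\mathcal F_0=\mathcal F(\mathfrak h)$ (sum $\varepsilon_0(f)$), and $$U_{g,0}\,\varepsilon_g(f)=e^{\langle g,f\rangle}\,\varepsilon_0(f),$$ where $U_{g,0}:\mathcal F_g\to\mathcal F_0$ is the continuous extension of $\Psi\mapsto e^{a(g)}\Psi$, $\Psi\in\mathcal F_{\rm fin}(\mathscr T)$.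
   Context: Let $\mathfrak h$ be a complex Hilbert space, $\mathscr T$ a topological vector space continuously embedded in $\mathfrak h$ with dense image, $\mathscr T'$ the space of continuous antilinear functionals on $\mathscr T$; write $\langle\varphi,f\rangle:=\overline{\varphi(f)}$ for $\varphi\in\mathscr T'$, $f\in\mathscr T$. $\mathcal F(\mathfrak h)$ is the symmetric Fock space; $\mathcal F_{\rm fin}(\mathscr T)$ the vectors with finitely many nonzero components, the $n$-th in the algebraic symmetric tensor product of $n$ copies of $\mathscr T$. For $g\in\mathscr T'$, $a(g)$ on $\mathcal F_{\rm fin}(\mathscr T)$ is defined linearly by $(a(g)\Psi)_n=\frac{\sqrt{n+1}}{(n+1)!}\sum_{\sigma\in S_{n+1}}\langle g,\psi_{\sigma(1)}\rangle\psi_{\sigma(2)}\otimes\cdots\otimes\psi_{\sigma(n+1)}$ for $\Psi_{n+1}=\psi_1\otimes_s\cdots\otimes_s\psi_{n+1}$; $e^{a(g)}=\sum_k a(g)^k/k!$ (finite sum). $\mathcal F_g$ is the completion of $\mathcal F_{\rm fin}(\mathscr T)$ in the inner product $\langle\Psi,\Phi\rangle_g:=\langle e^{a(g)}\Psi,e^{a(g)}\Phi\rangle_{\mathcal F(\mathfrak h)}$. *)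

From HB Require Import structures.
From mathcomp Require Import all_boot all_order all_algebra all_fingroup.
From mathcomp Require Import all_classical all_reals all_analysis.
From mathcomp Require Import complex.
Import ComplexField.
Import Order.TTheory GRing.Theory Num.Theory.
Import numFieldNormedType.Exports numFieldTopology.Exports.

Set Implicit Arguments.
Unset Strict Implicit.
Unset Printing Implicit Defensive.

Local Open Scope ring_scope.
Local Open Scope classical_set_scope.

#[non_forgetful_inheritance]
HB.instance Definition _ (R : realType) := PseudoPointedMetric.copy R[i] (R[i])^o.

Section Defs.
Variable R : realType.
Local Notation C := R[i].

(** ** Complex Hilbert space  (h, <.,.>) ; inner product antilinear in the
    first argument and linear in the second. *)
Definition is_inner_product (H : lmodType C) (ip : H -> H -> C) : Prop :=
  [/\ (forall x (a : C) y z, ip x (a *: y + z) = a * ip x y + ip x z),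
      (forall x y, ip y x = conjc (ip x y)),
      (forall x, 0 <= ip x x) &
      (forall x, ip x x = 0 -> x = 0)].

Definition ip_norm (H : lmodType C) (ip : H -> H -> C) (x : H) : R :=
  Num.sqrt (complex.Re (ip x x)).

Definition ip_complete (H : lmodType C) (ip : H -> H -> C) : Prop :=
  forall u : nat -> H,
    (forall e : R, 0 < e -> exists N, forall m n, (N <= m)%N -> (N <= n)%N ->
        ip_norm ip (u m - u n) < e) ->
    exists l : H, (fun n => ip_norm ip (u n - l)) @ \oo --> (0 : R).

Definition continuous_dense_embedding (T : topologicalLmodType C)
  (H : lmodType C) (ip : H -> H -> C) (emb : T -> H) : Prop :=
  [/\ (forall (a : C) x y, emb (a *: x + y) = a *: emb x + emb y),
      injective emb,
      (forall x : T, forall e : R, 0 < e ->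
          \forall y \near x, ip_norm ip (emb y - emb x) < e) &
      (forall h : H, forall e : R, 0 < e -> exists f : T, ip_norm ip (h - emb f) < e)].

Definition in_antidual (T : topologicalLmodType C) (g : T -> C) : Prop :=
  (forall (a : C) x y, g (a *: x + y) = conjc a * g x + g y) /\ continuous g.

Definition dualp (T : topologicalLmodType C) (g : T -> C) (f : T) : C :=
  conjc (g f).

Definition cexp (z : C) : C :=
  real_complex R (expR (complex.Re z)) *
  (real_complex R (cos (complex.Im z)) + 'i%C * real_complex R (sin (complex.Im z))).

(** A vector of F_fin(T) is represented by a finite formal linear combination
    [:: (c_1, s_1); ...; (c_k, s_k)] meaning  sum_j c_j * (s_j)_1 (x)_s ... (x)_s (s_j)_{n_j},
    a symmetric product tensor of n_j = size s_j factors, sitting in the n_j-particle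
    component; (x)_s is the symmetrisation of the tensor product.
    Sums of vectors are concatenations. *)
Section Fock.
Variables (T : topologicalLmodType C) (H : lmodType C) (ip : H -> H -> C) (emb : T -> H).

Definition fockrep := seq (C * seq T).

(* <psi_1 (x)_s ... (x)_s psi_n , phi_1 (x)_s ... (x)_s phi_m> in F(h) *)
Definition sym_ip (s t : seq T) : C :=
  if size s == size t then
    ((size s)`!%:R)^-1 * \sum_(sg : {perm 'I_(size s)})
        \prod_(i < size s) ip (emb (nth 0 s i)) (emb (nth 0 t (sg i)))
  else 0.

Definition fock_ip (Psi Phi : fockrep) : C :=
  \sum_(p <- Psi) \sum_(q <- Phi) conjc p.1 * q.1 * sym_ip p.2 q.2.

Definition fock_norm (Psi : fockrep) : R := Num.sqrt (complex.Re (fock_ip Psi Psi)).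

Definition fscale (c : C) (Psi : fockrep) : fockrep := [seq (c * p.1, p.2) | p <- Psi].

(* a(g) on a generator psi_1 (x)_s ... (x)_s psi_{n+1}:
   sqrt(n+1)/(n+1)! sum_{sigma in S_{n+1}} <g, psi_sigma(1)> psi_sigma(2) (x) ... (x) psi_sigma(n+1);
   the right-hand tensor can be symmetrised since the sum is symmetric. *)
Definition annih_gen (g : T -> C) (p : C * seq T) : fockrep :=
  match p.2 with
  | [::] => [::]
  | _ :: _ =>
    let n := (size p.2).-1 in
    [seq (p.1 * real_complex R (Num.sqrt (n.+1%:R : R)) / (n.+1)`!%:R
              * dualp g (nth 0 p.2 (sg ord0)),
          [seq nth 0 p.2 (sg (lift ord0 i)) | i <- enum 'I_n])
    | sg : {perm 'I_n.+1} <- enum {perm 'I_n.+1}]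
  end.

Definition annih (g : T -> C) (Psi : fockrep) : fockrep :=
  flatten [seq annih_gen g p | p <- Psi].

(* e^{a(g)} Psi = sum_k a(g)^k Psi / k!  (finite sum: a(g)^k Psi = 0 beyond the
   maximal particle number of Psi) *)
Definition exp_annih (g : T -> C) (Psi : fockrep) : fockrep :=
  flatten [seq fscale ((k`!%:R)^-1) (iter k (annih g) Psi)
          | k <- iota 0 (\max_(p <- Psi) size p.2).+1].

Definition g_norm (g : T -> C) (Psi : fockrep) : R := fock_norm (exp_annih g Psi).

Definition eps (n : nat) (f : T) : fockrep :=
  [:: (real_complex R (Num.sqrt (n`!%:R : R))^-1, nseq n f)].

Definition eps_partial (N : nat) (f : T) : fockrep :=
  flatten [seq eps n f | n <- iota 0 N].

End Fock.
End Defs.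

(* In the family eps_m(f) = f^(x)m / sqrt(m!) the annihilator acts as a weighted
   shift, a(g) eps_(m+1)(f) = <g,f> eps_m(f), and the eps_m(f) are orthogonal with
   ||eps_m(f)||^2 = ||f||^(2m) / m!.  So the eps_m(f)-coordinate of e^(a(g)) eps_n(f)
   is <g,f>^(n-m) / (n-m)!, and that of
   e^(a(g)) sum_(n<N) eps_n(f) - e^<g,f> sum_(n<N) eps_n(f) is a truncation error
   of the exponential series at <g,f>, at most |<g,f>|^(N-m) / (N-m)! e^|<g,f>|.
   Squaring and summing with the binomial theorem bounds both norms by
   sqrt((|<g,f>|^2 + ||f||^2)^n / n!) (the second one times e^|<g,f>|); these
   bounds are summable in n and tend to 0. *)

From HB Require Import structures.
From mathcomp Require Import all_boot all_order all_algebra all_fingroup.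
From mathcomp Require Import all_classical all_reals all_analysis.
From mathcomp Require Import complex.
Import ComplexField.
Import Order.TTheory GRing.Theory Num.Theory.
Import numFieldNormedType.Exports numFieldTopology.Exports.
Local Open Scope ring_scope.
Local Open Scope classical_set_scope.
From mathcomp Require Import ring lra zify.
Import Normc.

Set Implicit Arguments.
Unset Strict Implicit.
Unset Printing Implicit Defensive.

Section ExpSum.
Variable F : numFieldType.
Implicit Types (x y z w : F) (j d J n : nat).

Definition exp_sum J z : F := \sum_(k < J) z ^+ k / k`!%:R.

Lemma exprDn_fact x y n :
  \sum_(i < n.+1) x ^+ (n - i) * y ^+ i / ((n - i)`! * i`!)%:R = (x + y) ^+ n / n`!%:R.
Proof.
rewrite exprDn mulr_suml; apply: eq_bigr => i _.
have le_in : (i <= n)%N by rewrite -ltnS.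
have fact_neq0 k : (k`!%:R : F) != 0 by rewrite pnatr_eq0 -lt0n fact_gt0.
rewrite -(bin_fact le_in) !natrM -mulr_natr; field.
by rewrite !fact_neq0 pnatr_eq0 -lt0n bin_gt0 le_in.
Qed.

Lemma norm_exp_sum_tail_le z j d :
  `|exp_sum (j + d) z - exp_sum j z| <= `|z| ^+ j / j`!%:R * exp_sum d `|z|.
Proof.
rewrite /exp_sum big_split_ord /= addrAC subrr add0r mulr_sumr.
apply: le_trans (ler_norm_sum _ _ _) _; apply: ler_sum => i _.
rewrite normrM normfV normrX normr_nat exprD mulrACA ler_wpM2l //.
rewrite -invfM -natrM lef_pV2 ?ler_nat ?posrE ?ltr0n ?muln_gt0 ?fact_gt0 //.
have := bin_fact (leq_addr i j); rewrite addKn => <-.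
by rewrite leq_pmull // bin_gt0 leq_addr.
Qed.

(* [exp_sum J z * exp_sum J w] is the value at [1] of the product of the two
   truncated exponential polynomials: its coefficients below [J] are those of
   [exp_sum J (z + w)], and the remaining ones are dominated by the tail of the
   exponential series at [`|z| + `|w|]. *)
Lemma norm_exp_sumD_sub_mul_le z w J :
  `|exp_sum J (z + w) - exp_sum J z * exp_sum J w| <=
  exp_sum (J + J) (`|z| + `|w|) - exp_sum J (`|z| + `|w|).
Proof.
pose P := \poly_(i < J) (z ^+ i / i`!%:R); pose Q := \poly_(i < J) (w ^+ i / i`!%:R).
have horner1 u : exp_sum J u = (\poly_(i < J) (u ^+ i / i`!%:R)).[1].
  rewrite (horner_coef_wide _ (size_poly _ _)); apply: eq_bigr => i _.
  by rewrite coef_poly ltn_ord expr1n mulr1.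
have size_PQ : (size (P * Q)%R <= J + J)%N.
  apply: leq_trans (size_polyMleq _ _) _; rewrite -subn1 leq_subLR.
  by apply: leq_trans (leq_add (size_poly _ _) (size_poly _ _)) _; rewrite leq_addl.
have coefPQ k : (P * Q)`_k = \sum_(i < k.+1)
    (if (i < J)%N then z ^+ i / i`!%:R else 0) *
    (if (k - i < J)%N then w ^+ (k - i) / (k - i)`!%:R else 0).
  by rewrite coefM; apply: eq_bigr => i _; rewrite !coef_poly.
have low k : (k < J)%N -> (P * Q)`_k = (z + w) ^+ k / k`!%:R.
  move=> lt_kJ; rewrite coefPQ addrC -exprDn_fact; apply: eq_bigr => i _.
  have le_ik : (i <= k)%N by rewrite -ltnS.
  rewrite (leq_ltn_trans le_ik lt_kJ) (leq_ltn_trans (leq_subr i k) lt_kJ).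
  by rewrite natrM invfM; ring.
have trunc_le (u : F) i (b : bool) :
    `|if b then u ^+ i / i`!%:R else 0| <= `|u| ^+ i / i`!%:R.
  case: b; first by rewrite normrM normfV normrX normr_nat.
  by rewrite normr0 mulr_ge0 ?exprn_ge0 ?invr_ge0.
have high k : `|(P * Q)`_k| <= (`|z| + `|w|) ^+ k / k`!%:R.
  rewrite coefPQ addrC -exprDn_fact.
  apply: le_trans (ler_norm_sum _ _ _) _; apply: ler_sum => i _.
  rewrite normrM; apply: le_trans (ler_pM _ _ (trunc_le _ _ _) (trunc_le _ _ _)) _ => //.
  by rewrite natrM invfM le_eqVlt; apply/orP; left; apply/eqP; ring.
have split_PQ : exp_sum J z * exp_sum J w =
    \sum_(k < J) (P * Q)`_k + \sum_(i < J) (P * Q)`_(J + i).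
  rewrite !horner1 -hornerM (horner_coef_wide _ size_PQ) big_split_ord /=.
  by congr (_ + _); apply: eq_bigr => i _; rewrite expr1n mulr1.
rewrite split_PQ (eq_bigr _ (fun (k : 'I_J) _ => low k (ltn_ord k))) -/(exp_sum J (z + w)).
rewrite opprD addrA subrr add0r normrN /exp_sum big_split_ord /= addrAC subrr add0r.
by apply: le_trans (ler_norm_sum _ _ _) _; apply: ler_sum => i _; apply: high.
Qed.

End ExpSum.

Lemma fmorph_exp_sum (F K : numFieldType) (phi : {rmorphism F -> K}) J (z : F) :
  phi (exp_sum J z) = exp_sum J (phi z).
Proof.
by rewrite rmorph_sum; apply: eq_bigr => k _; rewrite fmorph_div rmorphXn rmorph_nat.
Qed.

Section RealExp.
Variable R : realType.
Implicit Types (x u r s : R) (J n M : nat).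

Lemma exp_sumE x J : exp_sum J x = series (exp_coeff x) J.
Proof. by rewrite /series /= big_mkord. Qed.

Lemma cvg_exp_sum x : (fun J => exp_sum J x) @ \oo --> expR x.
Proof.
rewrite (_ : (fun J => _) = series (exp_coeff x)); last by apply/funext => J; rewrite exp_sumE.
exact: is_cvg_series_exp_coeff.
Qed.

Lemma exp_sum_le_expR x J : 0 <= x -> exp_sum J x <= expR x.
Proof.
move=> x_ge0; rewrite exp_sumE; apply: nondecreasing_cvgn_le.
  by apply: nondecreasing_series => k _ _; apply: exp_coeff_ge0.
exact: is_cvg_series_exp_coeff.
Qed.

Lemma sum_exp_coeff_sqr_le u r n M : (M <= n.+1)%N -> 0 <= u -> 0 <= r ->
  \sum_(m < M) exp_coeff u (n - m)%N ^+ 2 * exp_coeff r m <= exp_coeff (u ^+ 2 + r) n.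
Proof.
move=> le_Mn u_ge0 r_ge0; rewrite [exp_coeff _ n]/exp_coeff /= -exprDn_fact.
rewrite (big_ord_widen _ (fun m => exp_coeff u (n - m)%N ^+ 2 * exp_coeff r m) le_Mn) big_mkcond.
apply: ler_sum => m _; rewrite /exp_coeff /=.
have term_ge0 : 0 <= (u ^+ 2) ^+ (n - m) * r ^+ m / ((n - m)`! * m`!)%:R.
  by rewrite divr_ge0 ?mulr_ge0 ?exprn_ge0 ?sqr_ge0.
case: ifP => // _.
set a : R := (n - m)`!%:R; set U := u ^+ (n - m).
have a_ge1 : 1 <= a by rewrite ler1n fact_gt0.
have -> : (U / a) ^+ 2 * (r ^+ m / m`!%:R) = U ^+ 2 * r ^+ m / m`!%:R * (a^-1 * a^-1).
  by rewrite expr_div_n expr2 invfM; ring.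
have -> : (u ^+ 2) ^+ (n - m) * r ^+ m / ((n - m)`! * m`!)%:R =
    U ^+ 2 * r ^+ m / m`!%:R * (a^-1 * 1).
  by rewrite -exprM mulnC exprM -/U natrM invfM -/a; ring.
rewrite ler_wpM2l ?divr_ge0 ?mulr_ge0 ?exprn_ge0 ?sqr_ge0 //.
rewrite ler_wpM2l ?invr_ge0 ?(le_trans ler01) //.
by rewrite invf_le1 // (lt_le_trans ltr01).
Qed.

Lemma is_cvg_series_sqrt_exp_coeff s : 0 <= s ->
  cvgn (series (fun n => Num.sqrt (exp_coeff s n))).
Proof.
move=> s_ge0.
have amgm a b : 0 <= a -> 0 <= b -> Num.sqrt (a * b) <= (a + b) / 2.
  move=> a_ge0 b_ge0; rewrite sqrtrM //.
  by have := sqr_ge0 (Num.sqrt a - Num.sqrt b); rewrite sqrrB !sqr_sqrtr //; lra.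
(* AM-GM: [sqrt (s ^+ n / n`!) <= ((2 s) ^+ n / n`! + 2 ^- n) / 2]. *)
pose v n := (exp_coeff (2 * s) n + geometric 1 (2^-1 : R) n) / 2.
apply: (series_le_cvg (v_ := v)) => [n|n|n|].
- by rewrite sqrtr_ge0.
- by rewrite /v /= divr_ge0 ?addr_ge0 ?exp_coeff_ge0 ?mulr_ge0 ?exprn_ge0 ?invr_ge0.
- have -> : exp_coeff s n = exp_coeff (2 * s) n * 2^-1 ^+ n.
    rewrite /exp_coeff /= exprMn exprVn; field.
    by rewrite pnatr_eq0 -lt0n fact_gt0 expf_neq0 // pnatr_eq0.
  rewrite /v /= mul1r; apply: amgm; last by rewrite exprn_ge0 ?invr_ge0.
  by rewrite exp_coeff_ge0 ?mulr_ge0.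
- have -> : v = (2^-1 : R) *: (exp_coeff (2 * s) + geometric 1 (2^-1)).
    by apply/funext => n; rewrite /v /= mulrC.
  apply: is_cvg_seriesZ; apply: is_cvg_seriesD; first exact: is_cvg_series_exp_coeff.
  by apply: is_cvg_geometric_series; rewrite ger0_norm ?invr_ge0 // invf_lt1 // ltr1n.
Qed.

Lemma cvg_sqrt_exp_coeff s : (fun n => Num.sqrt (exp_coeff s n)) @ \oo --> 0.
Proof.
rewrite -sqrtr0; apply: (continuous_cvg _ (@sqrt_continuous R 0)).
exact: cvg_exp_coeff.
Qed.

End RealExp.

Section ComplexExp.
Variable R : realType.
Local Notation C := R[i].
Local Open Scope complex_scope.
Implicit Types (x y : R) (z : C) (j d J : nat).

Lemma normc_real x : normc x%:C = `|x|.
Proof. by rewrite /= expr0n /= addr0 sqrtr_sqr. Qed.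

Lemma normc_ReIm_le x y : normc (x%:C + 'i%C * y%:C) <= `|x| + `|y|.
Proof.
apply: le_trans (le_normcD _ _) _.
by rewrite normcM normc_real normc_real /= expr0n expr1n /= add0r sqrtr1 mul1r.
Qed.

Lemma exp_coeff_iR y k :
  ('i%C * y%:C) ^+ k / k`!%:R = (cos_coeff y k)%:C + 'i%C * (sin_coeff y k)%:C.
Proof.
have i_even q : ('i%C ^+ q.*2 : C) = ((-1) ^+ q)%:C.
  by rewrite -muln2 mulnC exprM sqr_i rmorphXn rmorphN1.
rewrite exprMn /cos_coeff /sin_coeff /= -(odd_double_half k).
case: (odd k); move: k./2 => q; rewrite ?add1n ?add0n ?oddS odd_double ?doubleK /=.
- rewrite exprS i_even !mul0r mul1r rmorph0 add0r.
  by rewrite !(rmorphM, rmorphXn, fmorphV, rmorph_nat, rmorphN1); ring.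
- rewrite i_even !mul0r mul1r rmorph0 mulr0 addr0 -exprnP.
  by rewrite !(rmorphM, rmorphXn, fmorphV, rmorph_nat, rmorphN1); ring.
Qed.

Lemma normc_ge0 z : 0 <= normc z.
Proof. by case: z => a b; apply: sqrtr_ge0. Qed.

Lemma normcX z k : normc (z ^+ k) = normc z ^+ k.
Proof. by elim: k => [|k IH]; rewrite ?normc1 // !exprS normcM IH. Qed.

Lemma normc_exp_coeff z k : normc (z ^+ k / k`!%:R) = exp_coeff (normc z) k.
Proof. by rewrite normcM normcV normcX normcMn normc1. Qed.

Lemma exp_sum_iR y J :
  exp_sum J ('i%C * y%:C) = (series (cos_coeff y) J)%:C + 'i%C * (series (sin_coeff y) J)%:C.
Proof.
rewrite /exp_sum /series /= !big_mkord !rmorph_sum mulr_sumr -big_split.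
by apply: eq_bigr => k _; apply: exp_coeff_iR.
Qed.

Lemma exp_sum_real x J : exp_sum J x%:C = (exp_sum J x)%:C.
Proof. by rewrite (fmorph_exp_sum (real_complex R)). Qed.

Lemma normc_exp_sum_tail_le z j d :
  normc (exp_sum (j + d) z - exp_sum j z) <= exp_coeff (normc z) j * expR (normc z).
Proof.
rewrite -lecR; apply: le_trans (norm_exp_sum_tail_le z j d) _.
have -> : `|z| = (normc z)%:C by [].
rewrite exp_sum_real -rmorphXn -(rmorph_nat (real_complex R)) -fmorphV -!rmorphM lecR.
by rewrite ler_wpM2l ?exp_coeff_ge0 ?normc_ge0 ?exp_sum_le_expR ?normc_ge0.
Qed.

Lemma cvg_normc_exp_sumD_sub_mul z w :
  (fun J => normc (exp_sum J (z + w) - exp_sum J z * exp_sum J w)) @ \oo --> 0.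
Proof.
set s := normc z + normc w.
apply: (@squeeze_cvgr _ _ _ _ (fun=> 0) (fun J => expR s - exp_sum J s)).
- near=> J; rewrite normc_ge0 /=; apply: (@le_trans _ _ (exp_sum (J + J) s - exp_sum J s)).
    rewrite -lecR rmorphB /= -!exp_sum_real rmorphD /=.
    exact: norm_exp_sumD_sub_mul_le.
  by rewrite lerD2r exp_sum_le_expR // addr_ge0 ?normc_ge0.
- exact: cvg_cst.
- by rewrite -(subrr (expR s)); apply: cvgB; [exact: cvg_cst | exact: cvg_exp_sum].
Unshelve. all: end_near.
Qed.

(* [cexp] is defined through [expR], [cos] and [sin]: compare the partial sums
   at [x + i y] with the product of those at [x] and at [i y]. *)
Lemma cvg_exp_sum_cexp z : (fun J => normc (cexp z - exp_sum J z)) @ \oo --> 0.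
Proof.
set x := complex.Re z; set y := complex.Im z.
pose D J := exp_sum J z - exp_sum J x%:C * exp_sum J ('i%C * y%:C).
have D_cvg : (fun J => normc (D J)) @ \oo --> 0.
  by rewrite /D {1}[z]complexE; apply: cvg_normc_exp_sumD_sub_mul.
have cos_cvg : series (cos_coeff y) @ \oo --> cos y.
  by rewrite unlock; apply: is_cvg_series_cos_coeff.
have sin_cvg : series (sin_coeff y) @ \oo --> sin y.
  by rewrite unlock; apply: is_cvg_series_sin_coeff.
pose a J := expR x * cos y - exp_sum J x * series (cos_coeff y) J.
pose b J := expR x * sin y - exp_sum J x * series (sin_coeff y) J.
have ab_cvg (e : R) (u : R ^nat) : u @ \oo --> e ->
    (fun J => expR x * e - exp_sum J x * u J) @ \oo --> 0.
  move=> u_cvg; rewrite -(subrr (expR x * e)); apply: cvgB; first exact: cvg_cst.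
  by apply: cvgM => //; apply: cvg_exp_sum.
have split J : cexp z - exp_sum J z = (a J)%:C + 'i%C * (b J)%:C - D J.
  by rewrite /a /b /D exp_sum_iR exp_sum_real /cexp -/x -/y !rmorphB !rmorphM /=; ring.
apply: (@squeeze_cvgr _ _ _ _ (fun=> 0) (fun J => `|a J| + `|b J| + normc (D J))).
- near=> J; rewrite normc_ge0 split /=.
  by apply: le_trans (le_normcD _ _) _; rewrite normcN lerD2r normc_ReIm_le.
- exact: cvg_cst.
- have a_cvg : (fun J => `|a J|) @ \oo --> (0 : R).
    by apply/norm_cvg0P; apply: ab_cvg.
  have b_cvg : (fun J => `|b J|) @ \oo --> (0 : R).
    by apply/norm_cvg0P; apply: ab_cvg.
  rewrite -[X in _ --> X](addr0 0) -[X in _ --> X + _](addr0 0).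
  exact: cvgD (cvgD a_cvg b_cvg) D_cvg.
Unshelve. all: end_near.
Qed.

Lemma normc_cexp_sub_exp_sum_le z j :
  normc (cexp z - exp_sum j z) <= exp_coeff (normc z) j * expR (normc z).
Proof.
set B := exp_coeff (normc z) j * expR (normc z).
have u_cvg : (fun J => normc (cexp z - exp_sum J z) + B) @ \oo --> B.
  rewrite -[X in _ --> X]add0r; apply: cvgD; [exact: cvg_exp_sum_cexp | exact: cvg_cst].
rewrite -(cvg_lim _ u_cvg) //; apply: limr_ge; first by apply/cvg_ex; exists B.
near=> J; have le_jJ : (j <= J)%N by near: J; exists j.
rewrite -{1}(subrK (exp_sum J z) (cexp z)) -addrA.
apply: le_trans (le_normcD _ _) _; rewrite lerD2l -(subnKC le_jJ).
exact: normc_exp_sum_tail_le.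
Unshelve. all: end_near.
Qed.

Lemma ge0_complex_Re z : 0 <= z -> z = (complex.Re z)%:C /\ 0 <= complex.Re z.
Proof.
rewrite lecE => /andP[/eqP Im0 Re_ge0]; split => //.
by rewrite [LHS]complexE Im0 /= rmorph0 mulr0 addr0.
Qed.

End ComplexExp.

Lemma sum_by_key (I : eqType) (V : nmodType) (key : I -> nat) M (G : I -> V) (s : seq I) :
  all (fun i => key i < M)%N s -> \sum_(i <- s) G i = \sum_(m < M) \sum_(i <- s | key i == m) G i.
Proof.
move=> /allP key_lt; under [RHS]eq_bigr do rewrite big_mkcond; rewrite exchange_big /=.
apply: eq_big_seq => i /key_lt lt_iM; rewrite -big_mkcond /=.
by under eq_bigl do rewrite eq_sym; rewrite (big_ord1_eq _ (fun=> G i)) lt_iM.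
Qed.

Lemma sum_iota0 (V : nmodType) n (F : nat -> V) :
  \sum_(k <- iota 0 n) F k = \sum_(k < n) F k.
Proof. by rewrite -(big_mkord xpredT) /index_iota subn0. Qed.

Section FockPowers.
Variables (R : realType) (H : lmodType R[i]) (ip : H -> H -> R[i])
  (T : topologicalLmodType R[i]) (emb : T -> H) (g : T -> R[i]) (f : T).
Local Notation C := R[i].
Local Notation gamma := (dualp g f).
Local Open Scope complex_scope.
Implicit Types (Psi Phi : fockrep T) (c : C) (k m n M N : nat).

Definition fpow_span M Psi : bool :=
  all (fun p => (p.2 == nseq (size p.2) f) && (size p.2 < M)%N) Psi.

(* The coordinate of [Psi] along eps_m(f) = f^(x)m / sqrt(m!). *)
Definition ecoef Psi m : C :=
  (Num.sqrt (m`!%:R : R))%:C * \sum_(p <- Psi | size p.2 == m) p.1.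

Lemma ecoef_cat Psi Phi m : ecoef (Psi ++ Phi) m = ecoef Psi m + ecoef Phi m.
Proof. by rewrite /ecoef big_cat mulrDr. Qed.

Lemma ecoef_flatten (s : seq nat) (F : nat -> fockrep T) m :
  ecoef (flatten [seq F k | k <- s]) m = \sum_(k <- s) ecoef (F k) m.
Proof. by rewrite /ecoef big_flatten big_map mulr_sumr. Qed.

Lemma ecoef_fscale c Psi m : ecoef (fscale c Psi) m = c * ecoef Psi m.
Proof. by rewrite /ecoef big_map -mulr_sumr mulrCA. Qed.

Lemma ecoef_nseq k c n m :
  ecoef (nseq k (c, nseq n f)) m = if n == m then ecoef [:: (c, nseq n f)] m *+ k else 0.
Proof.
rewrite /ecoef big_nseq_cond big_cons big_nil /= size_nseq iter_addr_0 addr0.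
by case: eqP; rewrite ?mulr0 ?mulrnAr.
Qed.

Lemma annih_gen_nseq c n :
  annih_gen g (c, nseq n.+1 f) =
  nseq n.+1`! (c * (Num.sqrt (n.+1%:R : R))%:C / n.+1`!%:R * gamma, nseq n f).
Proof.
rewrite /annih_gen /= size_nseq.
have map_cst (A B : Type) (b : B) (s : seq A) : [seq b | _ <- s] = nseq (size s) b.
  by elim: s => //= x s ->.
rewrite (eq_map (g := fun=> (c * (Num.sqrt (n.+1%:R : R))%:C / n.+1`!%:R * gamma, nseq n f))).
  by rewrite map_cst -cardE card_Sn.
move=> sg /=; rewrite -[f :: nseq n f]/(nseq n.+1 f) nth_nseq ltn_ord; congr (_, _).
rewrite (eq_map (g := fun=> f)); first by rewrite map_cst size_enum_ord.
by move=> i; rewrite nth_nseq ltn_ord.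
Qed.

Lemma ecoef_annih_gen c n m :
  ecoef (annih_gen g (c, nseq n f)) m = gamma * ecoef [:: (c, nseq n f)] m.+1.
Proof.
case: n => [|n].
  by rewrite /ecoef big_cons !big_nil /= !mulr0.
rewrite annih_gen_nseq ecoef_nseq /ecoef !big_cons !big_nil /= !size_nseq eqSS !addr0.
case: eqP => [<-|_]; last by rewrite !mulr0.
have sqrt_factS : (Num.sqrt (n.+1`!%:R : R))%:C =
    (Num.sqrt (n.+1%:R : R))%:C * (Num.sqrt (n`!%:R : R))%:C.
  by rewrite factS natrM sqrtrM // rmorphM.
have fact_neq0 : (n.+1`!%:R : C) != 0 by rewrite pnatr_eq0 -lt0n fact_gt0.
by rewrite sqrt_factS -mulr_natr; field.
Qed.

Lemma fpow_span_annih M Psi : fpow_span M Psi -> fpow_span M (annih g Psi).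
Proof.
elim: Psi => // -[c s] Psi IH /= /andP[/andP[/eqP s_eq lt_sM] /IH].
rewrite /annih /= -/(annih g Psi) /fpow_span all_cat => ->; rewrite andbT s_eq.
case: (size s) lt_sM => [|n] lt_nM //; rewrite annih_gen_nseq all_nseq /=.
by rewrite size_nseq eqxx (ltnW lt_nM) orbT.
Qed.

Lemma ecoef_annih M Psi m :
  fpow_span M Psi -> ecoef (annih g Psi) m = gamma * ecoef Psi m.+1.
Proof.
elim: Psi => [|[c s] Psi IH]; first by rewrite /ecoef !big_nil !mulr0.
move=> /= /andP[/andP[/eqP s_eq _] /IH IHPsi].
rewrite /annih /= -/(annih g Psi) ecoef_cat IHPsi -cat1s ecoef_cat mulrDr s_eq.
by rewrite ecoef_annih_gen.
Qed.

Lemma fpow_span_iter_annih M k Psi :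
  fpow_span M Psi -> fpow_span M (iter k (annih g) Psi).
Proof. by move=> span_Psi; elim: k => //= k; apply: fpow_span_annih. Qed.

Lemma ecoef_iter_annih M k Psi m : fpow_span M Psi ->
  ecoef (iter k (annih g) Psi) m = gamma ^+ k * ecoef Psi (m + k).
Proof.
move=> span_Psi; elim: k m => [|k IH] m; first by rewrite mul1r addn0.
rewrite iterS (ecoef_annih _ (fpow_span_iter_annih k span_Psi)) IH.
by rewrite exprS mulrA addSnnS.
Qed.

Lemma fpow_span_exp_annih M Psi : fpow_span M Psi -> fpow_span M (exp_annih g Psi).
Proof.
move=> span_Psi; apply/allP => p /flattenP[_ /mapP[k _ ->]] /mapP[q q_in ->] /=.
by move/allP: (fpow_span_iter_annih k span_Psi) => /(_ q q_in).
Qed.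

Lemma ecoef_exp_annih M Psi m : fpow_span M Psi ->
  ecoef (exp_annih g Psi) m =
  \sum_(k < (\max_(p <- Psi) size p.2).+1) gamma ^+ k / k`!%:R * ecoef Psi (m + k).
Proof.
move=> span_Psi; rewrite /exp_annih ecoef_flatten sum_iota0.
apply: eq_bigr => k _; rewrite ecoef_fscale (ecoef_iter_annih _ _ span_Psi).
by rewrite mulrCA mulrA.
Qed.

Lemma fpow_span_fscale M c Psi : fpow_span M (fscale c Psi) = fpow_span M Psi.
Proof. by rewrite /fpow_span all_map. Qed.

Lemma fpow_span_eps n : fpow_span n.+1 (eps n f).
Proof. by rewrite /fpow_span /= size_nseq eqxx ltnSn. Qed.

Lemma ecoef_eps n m : ecoef (eps n f) m = (n == m)%:R.
Proof.
rewrite /ecoef big_cons big_nil /= size_nseq addr0; case: eqP => [<-|_]; last by rewrite mulr0.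
rewrite -rmorphM mulfV ?sqrtr_eq0 -?ltNge ?ltr0n ?fact_gt0 //.
Qed.

Lemma fpow_span_eps_partial N : fpow_span N (eps_partial N f).
Proof.
apply/allP => p /flattenP[_ /mapP[n n_lt ->]]; rewrite mem_seq1 => /eqP-> /=.
by rewrite size_nseq eqxx; move: n_lt; rewrite mem_iota.
Qed.

Lemma ecoef_eps_partial N m : ecoef (eps_partial N f) m = (m < N)%:R.
Proof.
rewrite /eps_partial ecoef_flatten sum_iota0.
under eq_bigr do rewrite ecoef_eps.
case: ltnP => [lt_mN|le_Nm].
  rewrite (bigD1 (Ordinal lt_mN)) //= eqxx big1 ?addr0 // => k.
  by rewrite -val_eqE /= => /negbTE->.
by rewrite big1 // => k _; rewrite ltn_eqF // (leq_trans (ltn_ord k)).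
Qed.

Lemma max_size_eps_partial N : (N <= (\max_(p <- eps_partial N f) size p.2).+1)%N.
Proof.
case: N => // n; rewrite ltnS.
have p_in : ((Num.sqrt (n`!%:R : R))^-1%:C, nseq n f) \in eps_partial n.+1 f.
  apply/flattenP; exists (eps n f); last exact: mem_head.
  by apply/mapP; exists n; rewrite // mem_iota add0n ltnSn.
by have := @leq_bigmax_seq _ _ xpredT (fun p => size p.2) _ p_in isT; rewrite /= size_nseq.
Qed.

Variable r : R.
Hypothesis ip_ff : ip (emb f) (emb f) = r%:C.

Lemma sym_ip_nseq n n' :
  sym_ip ip emb (nseq n f) (nseq n' f) = if n == n' then (r ^+ n)%:C else 0.
Proof.
rewrite /sym_ip !size_nseq; case: eqP => // <-.
rewrite (eq_bigr (fun=> (r ^+ n)%:C)); last first.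
  move=> sg _; rewrite (eq_bigr (fun=> r%:C)); last first.
    by move=> i _; rewrite !nth_nseq !ltn_ord.
  by rewrite prodr_const card_ord rmorphXn.
by rewrite sumr_const card_Sn -mulr_natr; field; rewrite pnatr_eq0 -lt0n fact_gt0.
Qed.

Lemma fock_ip_fpow M Psi Phi : fpow_span M Psi -> fpow_span M Phi ->
  fock_ip ip emb Psi Phi =
  \sum_(m < M) conjc (ecoef Psi m) * ecoef Phi m * (exp_coeff r m)%:C.
Proof.
move=> span_Psi span_Phi.
have size_lt Xi : fpow_span M Xi -> all (fun p => size p.2 < M)%N Xi.
  by apply: sub_all => p /andP[].
rewrite /fock_ip (sum_by_key _ (size_lt _ span_Psi)).
apply: eq_bigr => m _.
set sq := (Num.sqrt (m`!%:R : R))%:C.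
have fact_neq0 : (m`!%:R : C) != 0 by rewrite pnatr_eq0 -lt0n fact_gt0.
have sq_sq : sq * sq = m`!%:R by rewrite -rmorphM -expr2 sqr_sqrtr // rmorph_nat.
have sq_neq0 : sq != 0 by apply: contraNneq fact_neq0 => sq0; rewrite -sq_sq sq0 mul0r.
have -> : conjc (ecoef Psi m) * ecoef Phi m * (exp_coeff r m)%:C =
    conjc (\sum_(p <- Psi | size p.2 == m) p.1) * (\sum_(q <- Phi | size q.2 == m) q.1) *
    (r ^+ m)%:C.
  have conjc_sqM (A : C) : conjc (sq * A) = sq * conjc A.
    by case: A => a b; rewrite /sq /=; congr (_ +i* _); ring.
  have exp_coeffC : (exp_coeff r m)%:C = (r ^+ m)%:C / m`!%:R.
    by rewrite /exp_coeff /= -(rmorph_nat (real_complex R)) -fmorphV -rmorphM.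
  by rewrite /ecoef -/sq conjc_sqM exp_coeffC -sq_sq; field.
rewrite rmorph_sum !mulr_suml big_seq_cond [RHS]big_seq_cond.
apply: eq_bigr => p /andP[/(allP span_Psi) /andP[/eqP p_eq _] /eqP p_m].
rewrite mulr_sumr mulr_suml [RHS]big_mkcond; apply: eq_big_seq => q /(allP span_Phi).
case/andP=> /eqP q_eq _; rewrite p_eq q_eq sym_ip_nseq !size_nseq p_m.
by rewrite eq_sym; case: eqP; rewrite ?mulr0.
Qed.

Lemma fock_norm_fpow M Psi : fpow_span M Psi ->
  fock_norm ip emb Psi = Num.sqrt (\sum_(m < M) normc (ecoef Psi m) ^+ 2 * exp_coeff r m).
Proof.
move=> span_Psi; rewrite /fock_norm (fock_ip_fpow span_Psi span_Psi); congr Num.sqrt.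
have real_term m : conjc (ecoef Psi m) * ecoef Psi m * (exp_coeff r m)%:C =
    (normc (ecoef Psi m) ^+ 2 * exp_coeff r m)%:C.
  by rewrite [conjc _ * _]mulrC -sqr_normc [RHS]rmorphM rmorphXn.
by under eq_bigr do rewrite real_term; rewrite -rmorph_sum.
Qed.

Hypothesis r_ge0 : 0 <= r.

Lemma fock_norm_fpow_le M n (K u : R) Psi : fpow_span M Psi -> (M <= n.+1)%N ->
  0 <= K -> 0 <= u ->
  (forall m, (m < M)%N -> normc (ecoef Psi m) <= K * exp_coeff u (n - m)%N) ->
  fock_norm ip emb Psi <= K * Num.sqrt (exp_coeff (u ^+ 2 + r) n).
Proof.
move=> span_Psi le_Mn K_ge0 u_ge0 ecoef_le.
have -> : K * Num.sqrt (exp_coeff (u ^+ 2 + r) n) =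
    Num.sqrt (K ^+ 2 * exp_coeff (u ^+ 2 + r) n).
  by rewrite [RHS]sqrtrM ?sqr_ge0 // sqrtr_sqr ger0_norm.
rewrite (fock_norm_fpow span_Psi); apply: ler_wsqrtr.
apply: le_trans (ler_wpM2l (sqr_ge0 K) (sum_exp_coeff_sqr_le le_Mn u_ge0 r_ge0)).
rewrite mulr_sumr; apply: ler_sum => m _; rewrite [leRHS]mulrA -exprMn.
rewrite ler_wpM2r ?exp_coeff_ge0 //.
rewrite ler_sqr ?nnegrE ?normc_ge0 ?mulr_ge0 ?exp_coeff_ge0 ?exprn_ge0 //.
exact: ecoef_le.
Qed.

Lemma fock_norm_eps_le n : fock_norm ip emb (eps n f) <= Num.sqrt (exp_coeff r n).
Proof.
have := fock_norm_fpow_le (fpow_span_eps n) (leqnn _) ler01 (lexx 0).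
rewrite expr0n add0r mul1r; apply => m lt_mn.
rewrite ecoef_eps mul1r; case: eqP => [->|_]; last by rewrite mulr0n normc0 exp_coeff_ge0.
by rewrite mulr1n subnn normc1 /exp_coeff /= expr0 divr1.
Qed.

Lemma g_norm_eps_le n :
  g_norm ip emb g (eps n f) <= Num.sqrt (exp_coeff (normc gamma ^+ 2 + r) n).
Proof.
rewrite /g_norm -[X in _ <= X]mul1r.
apply: fock_norm_fpow_le (fpow_span_exp_annih (fpow_span_eps n)) _ _ _ _ => //.
  exact: normc_ge0.
move=> m lt_mn; rewrite mul1r (ecoef_exp_annih _ (fpow_span_eps n)) big_seq1 size_nseq.
have pick (k : 'I_n.+1) : gamma ^+ k / k`!%:R * ecoef (eps n f) (m + k)%N =
    if k == (n - m)%N :> nat then gamma ^+ k / k`!%:R else 0.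
  rewrite ecoef_eps; have -> : (n == m + k)%N = (k == n - m :> nat)%N by apply/eqP/eqP; lia.
  by case: eqP; rewrite ?mulr1 ?mulr0.
rewrite (eq_bigr _ (fun (k : 'I_n.+1) _ => pick k)) -big_mkcond /=.
by rewrite (big_ord1_eq _ (fun k => gamma ^+ k / k`!%:R)) ltnS leq_subr normc_exp_coeff.
Qed.

Lemma fock_norm_exp_annih_sub_le N :
  fock_norm ip emb (exp_annih g (eps_partial N f) ++ fscale (- cexp gamma) (eps_partial N f))
  <= expR (normc gamma) * Num.sqrt (exp_coeff (normc gamma ^+ 2 + r) N).
Proof.
have span_N := fpow_span_eps_partial N.
have span_diff : fpow_span N
    (exp_annih g (eps_partial N f) ++ fscale (- cexp gamma) (eps_partial N f)).
  rewrite /fpow_span all_cat -!/(fpow_span N _).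
  by rewrite fpow_span_exp_annih // fpow_span_fscale.
apply: fock_norm_fpow_le span_diff (leqnSn N) (expR_ge0 _) (normc_ge0 _) _ => m lt_mN.
rewrite ecoef_cat ecoef_fscale (ecoef_exp_annih _ span_N) ecoef_eps_partial lt_mN mulr1.
set K := (\max_(p <- _) _).+1.
have le_NmK : (N - m <= K)%N := leq_trans (leq_subr m N) (max_size_eps_partial N).
have trunc (k : 'I_K) : gamma ^+ k / k`!%:R * ecoef (eps_partial N f) (m + k)%N =
    if (k < N - m)%N then gamma ^+ k / k`!%:R else 0.
  by rewrite ecoef_eps_partial -ltn_subRL; case: ifP; rewrite ?mulr1 ?mulr0.
rewrite (eq_bigr _ (fun (k : 'I_K) _ => trunc k)) -big_mkcond /=.
rewrite -(big_ord_widen _ (fun k => gamma ^+ k / k`!%:R) le_NmK) -/(exp_sum (N - m) gamma).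
by rewrite -normcN opprD opprK addrC mulrC normc_cexp_sub_exp_sum_le.
Qed.

End FockPowers.

Unset Implicit Arguments.

Theorem lemma2p15 (R : realType) (H : lmodType R[i]) (ip : H -> H -> R[i])
  (T : topologicalLmodType R[i]) (emb : T -> H)
  (Hip : is_inner_product ip) (Hcompl : ip_complete ip)
  (Hiota : continuous_dense_embedding ip emb)
  (g : T -> R[i]) (Hg : in_antidual g) (f : T) :
  [/\ cvgn (series (fun n => g_norm ip emb g (eps n f))),
      cvgn (series (fun n => fock_norm ip emb (eps n f))) &
      (fun N => fock_norm ip emb
                  (exp_annih g (eps_partial N f)
                   ++ fscale (- cexp (dualp g f)) (eps_partial N f)))
        @ \oo --> (0 : R)].
Proof.
have [_ _ ip_ge0 _] := Hip.
have [ip_ff r_ge0] := ge0_complex_Re (ip_ge0 (emb f)).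
set r := complex.Re _ in ip_ff r_ge0.
set s := normc (dualp g f) ^+ 2 + r.
have s_ge0 : 0 <= s by rewrite addr_ge0 ?sqr_ge0.
split.
- apply: (series_le_cvg (v_ := fun n => Num.sqrt (exp_coeff s n))) => [n|n|n|].
  + exact: sqrtr_ge0.
  + exact: sqrtr_ge0.
  + exact: g_norm_eps_le.
  + exact: is_cvg_series_sqrt_exp_coeff.
- apply: (series_le_cvg (v_ := fun n => Num.sqrt (exp_coeff r n))) => [n|n|n|].
  + exact: sqrtr_ge0.
  + exact: sqrtr_ge0.
  + exact: fock_norm_eps_le.
  + exact: is_cvg_series_sqrt_exp_coeff.
- pose K := expR (normc (dualp g f)).
  apply: (squeeze_cvgr (f := fun=> 0) (h := fun N => K * Num.sqrt (exp_coeff s N))).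
  + by near=> N; rewrite sqrtr_ge0 /= fock_norm_exp_annih_sub_le.
  + exact: cvg_cst.
  + by rewrite -(mulr0 K); apply: cvgMr; apply: cvg_sqrt_exp_coeff.
Unshelve. all: end_near.
Qed.
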